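(* Let $k$ and $n$ be integers such that $k \geq 2$ and $n \geq 2k$, and let $(V,\mathcal{A}')$ be a partial $k$-star design of order $n$ with fewer than $u(n,k)$ stars. Then the leftover $L'$ of $(V,\mathcal{A}')$ contains a $k$-star.
   Context: A $k$-star is a copy of $K_{1,k}$. A partial $k$-star design of order $n$ is a pair $(V,\mathcal{A})$ where $V$ is a set of $n$ vertices and $\mathcal{A}$ is a set of edge-disjoint $k$-stars that are subgraphs of the complete graph $K_V$. The leftover of $(V,\mathcal{A})$ is the graph on vertex set $V$ whose edges are the edges of $K_V$ not lying in any star of $\mathcal{A}$. Here \[u(n,k)= \begin{cases} 2 \lfloor \frac{n-2}{k} \rfloor-1 & \text{if $n \not \equiv 1\pmod{k}$},\\ \frac{2(n-1)}{k} - 2 & \text{if $n \equiv 1\pmod{k}$.} \end{cases} \] *)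

From mathcomp Require Import all_boot.
Unset Printing Implicit Defensive.

(* Vertex set V = 'I_n (any n-set).
   A k-star K_{1,k} (k >= 1) is given by its centre c and its set S of k
   leaves, c \notin S; its edges are the pairs {c, x}, x in S. *)
Definition star (n : nat) := ('I_n * {set 'I_n})%type.

Definition is_kstar (n k : nat) (s : star n) : bool :=
  (s.1 \notin s.2) && (#|s.2| == k).

Definition star_edges (n : nat) (s : star n) : {set {set 'I_n}} :=
  [set [set s.1; x] | x in s.2].

Definition partial_star_design (n k : nat) (A : {set star n}) : Prop :=
  (forall s, s \in A -> is_kstar n k s) /\
  (forall s t, s \in A -> t \in A -> s != t ->
     [disjoint star_edges n s & star_edges n t]).

Definition leftover_edge (n : nat) (A : {set star n}) (e : {set 'I_n}) : bool :=
  (#|e| == 2) && [forall s in A, e \notin star_edges n s].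

Definition leftover_has_kstar (n k : nat) (A : {set star n}) : Prop :=
  exists s : star n, is_kstar n k s /\
    (forall e, e \in star_edges n s -> leftover_edge n A e).

Definition u (n k : nat) : nat :=
  if n %% k == 1 %% k then (2 * (n - 1)) %/ k - 2
  else 2 * ((n - 2) %/ k) - 1.

From mathcomp Require Import all_boot zify.

Set Implicit Arguments.
Unset Strict Implicit.

(* Every edge of a star contains its centre, so an edge neither of whose ends
   is the centre of a star of A is a leftover edge.  Fewer than
   u(n,k) <= n - k vertices are centres, so at least k + 1 vertices are not,
   and any k + 1 of them span a leftover k-star. *)

Lemma exists_subset_card (T : finType) (B : {set T}) m :
  m <= #|B| -> exists2 S : {set T}, S \subset B & #|S| = m.
Proof.
move=> le_mB; exists [set x in take m (enum B)].
  by apply/subsetP=> x; rewrite inE => /mem_take; rewrite mem_enum.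
rewrite cardsE (card_uniqP _); last exact/take_uniq/enum_uniq.
by rewrite size_takel // -cardE.
Qed.

Lemma u_le_subn k n : 2 <= k -> 2 * k <= n -> u n k <= n - k.
Proof.
move=> k_ge2 n_ge2k; rewrite /u (@modn_small 1) //.
case: ifP => [/eqP n_mod | _].
  have n_eq := divn_eq n k; rewrite n_mod in n_eq; set q := n %/ k in n_eq *.
  have -> : (2 * (n - 1)) %/ k = 2 * q.
    by rewrite n_eq addnK mulnA mulnK //; lia.
  nia.
have := divn_eq (n - 2) k; have := ltn_pmod (n - 2) (ltnW k_ge2); nia.
Qed.

Definition centres n (A : {set star n}) : {set 'I_n} := [set s.1 | s in A].

Lemma centres_card_le n (A : {set star n}) : #|centres A| <= #|A|.
Proof. exact: leq_imset_card. Qed.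

Lemma star_edges_centre n (s : star n) e : e \in star_edges n s -> s.1 \in e.
Proof. by case/imsetP=> x _ ->; rewrite set21. Qed.

Lemma leftover_edge_off_centres n (A : {set star n}) (x y : 'I_n) :
  x != y -> x \notin centres A -> y \notin centres A ->
  leftover_edge n A [set x; y].
Proof.
move=> neq_xy xC yC; rewrite /leftover_edge cards2 neq_xy /=.
apply/forall_inP=> s sA; apply/negP=> /star_edges_centre.
have s1C : s.1 \in centres A by apply: imset_f.
by rewrite !inE => /orP [] /eqP s1E; [move: xC | move: yC]; rewrite -s1E s1C.
Qed.

Lemma leftover_has_kstar_few_centres n k (A : {set star n}) :
  #|centres A| + k < n -> leftover_has_kstar n k A.
Proof.
move=> few_centres.
have free_card : k < #|~: centres A|.
  by move: (cardsC (centres A)); rewrite card_ord; lia.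
have [F F_free card_F] := exists_subset_card free_card.
have [c cF] : exists c, c \in F by apply/card_gt0P; rewrite card_F.
have free x : x \in F -> x \notin centres A.
  by move/(subsetP F_free); rewrite inE.
exists (c, F :\ c); split.
  rewrite /is_kstar /= setD11 /=.
  by move: (cardsD1 c F); rewrite cF card_F => -[->].
move=> e /imsetP [x /= /setD1P [xc xF] ->].
by apply: leftover_edge_off_centres; rewrite 1?eq_sym ?free.
Qed.

Theorem lemma4 (k n : nat) (A : {set star n}) :
  2 <= k -> 2 * k <= n ->
  partial_star_design n k A ->
  #|A| < u n k ->
  leftover_has_kstar n k A.
Proof.
move=> k_ge2 n_ge2k _ few_stars.
apply: leftover_has_kstar_few_centres.
have := centres_card_le A; have := u_le_subn k_ge2 n_ge2k; lia.
Qed.
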